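(* Two quantity spaces over the same field $K$ are isomorphic (as scalable monoids) if and only if they have the same rank.
   Context: A scalable monoid over a (unital, associative) ring $R$ is a monoid $X$ (identity $1_X$, product written $xy$) together with a map $R\times X\to X$, $(\alpha,x)\mapsto\alpha\cdot x$, such that $1\cdot x=x$, $\alpha\cdot(\beta\cdot x)=\alpha\beta\cdot x$ and $\alpha\cdot(xy)=(\alpha\cdot x)y=x(\alpha\cdot y)$. A quantity space over a field $K$ is a commutative scalable monoid $Q$ over $K$ for which there exists a basis, i.e. a finite set $\{e_1,\ldots,e_n\}$ of invertible elements of $Q$ such that every $x\in Q$ has a unique expansion $x=\mu\cdot\prod_{i=1}^n e_i^{k_i}$ with $\mu\in K$ and $k_1,\ldots,k_n\in\mathbb{Z}$. All bases of a quantity space have the same cardinality $n$, called its rank. An isomorphism of scalable monoids $Q\to Q'$ over $K$ is a bijection $\phi$ with $\phi(1_Q)=1_{Q'}$, $\phi(xy)=\phi(x)\phi(y)$ and $\phi(\lambda\cdot x)=\lambda\cdot\phi(x)$ for all $x,y\in Q$, $\lambda\in K$. *)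

From HB Require Import structures.
From mathcomp Require Import all_boot all_order all_algebra.
From Stdlib Require Import ClassicalEpsilon.
Set Implicit Arguments. Unset Strict Implicit. Unset Printing Implicit Defensive.
Import GRing.Theory.
Local Open Scope ring_scope.

Record ScalableMonoid (R : nzRingType) := {
  sm_car :> Type;
  sm_one : sm_car;
  sm_mul : sm_car -> sm_car -> sm_car;
  sm_scale : R -> sm_car -> sm_car;
  sm_mulA : forall x y z, sm_mul x (sm_mul y z) = sm_mul (sm_mul x y) z;
  sm_mul1x : forall x, sm_mul sm_one x = x;
  sm_mulx1 : forall x, sm_mul x sm_one = x;
  sm_scale1 : forall x, sm_scale 1 x = x;
  sm_scaleA : forall a b x, sm_scale a (sm_scale b x) = sm_scale (a * b) x;
  sm_scale_mull : forall a x y, sm_scale a (sm_mul x y) = sm_mul (sm_scale a x) y;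
  sm_scale_mulr : forall a x y, sm_scale a (sm_mul x y) = sm_mul x (sm_scale a y)
}.
Arguments sm_one {R s}.
Arguments sm_mul {R s}.
Arguments sm_scale {R s}.

Section Basis.
Variables (R : nzRingType) (X : ScalableMonoid R).

Definition zpow (e einv : X) (k : int) : X :=
  match k with
  | Posz m => iter m (sm_mul e) (sm_one)
  | Negz m => iter m.+1 (sm_mul einv) (sm_one)
  end.

Definition expansion n (e einv : 'I_n -> X) (mu : R) (k : {ffun 'I_n -> int}) : X :=
  sm_scale mu (\big[sm_mul / sm_one]_(i < n) zpow (e i) (einv i) (k i)).

Definition is_basis n (e : 'I_n -> X) : Prop :=
  exists einv : 'I_n -> X,
    (forall i, sm_mul (e i) (einv i) = sm_one /\ sm_mul (einv i) (e i) = sm_one) /\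
    (forall x, exists! p : R * {ffun 'I_n -> int}, expansion e einv p.1 p.2 = x).

Definition has_basis_of_size n : Prop := exists e : 'I_n -> X, is_basis e.
End Basis.

Definition is_quantity_space (K : fieldType) (Q : ScalableMonoid K) : Prop :=
  (forall x y : Q, sm_mul x y = sm_mul y x) /\ exists n, has_basis_of_size Q n.

(* rank: the (minimal, hence by the paper's invariance theorem the common)
   cardinality of a basis. *)
Definition rank (K : fieldType) (Q : ScalableMonoid K) : nat :=
  epsilon (inhabits 0%N)
    (fun n => has_basis_of_size Q n /\ forall m, has_basis_of_size Q m -> (n <= m)%N).

Definition sm_isomorphic (K : fieldType) (Q Q' : ScalableMonoid K) : Prop :=
  exists phi : Q -> Q',
    bijective phi /\ phi sm_one = sm_one /\
    (forall x y, phi (sm_mul x y) = sm_mul (phi x) (phi y)) /\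
    (forall (l : K) x, phi (sm_scale l x) = sm_scale l (phi x)).

(* An isomorphism carries a basis to a basis, so isomorphic quantity spaces
   have bases of the same sizes and hence the same (minimal) rank.
   Conversely, a basis of size n of a commutative scalable monoid Q makes
   the expansion map (mu, k) |-> mu . prod_i e_i^(k_i) an isomorphism from
   the coordinate space K x Z^n onto Q; two quantity spaces of rank n are
   thus both isomorphic to K x Z^n. *)
From HB Require Import structures.
From mathcomp Require Import all_boot all_algebra.
From mathcomp Require Import zify.
From Stdlib Require Import ClassicalEpsilon.
Set Implicit Arguments. Unset Strict Implicit. Unset Printing Implicit Defensive.
Import GRing.Theory.
Local Open Scope ring_scope.

Lemma iter_sm_mulD (R : nzRingType) (X : ScalableMonoid R) (x : X) a b :
  iter (a + b) (sm_mul x) sm_one = sm_mul (iter a (sm_mul x) sm_one) (iter b (sm_mul x) sm_one).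
Proof. by elim: a => [|a IH] /=; rewrite ?sm_mul1x // IH sm_mulA. Qed.

Definition sm_morphism (R : nzRingType) (X Y : ScalableMonoid R) (f : X -> Y) : Prop :=
  [/\ f sm_one = sm_one,
      forall x y, f (sm_mul x y) = sm_mul (f x) (f y) &
      forall l x, f (sm_scale l x) = sm_scale l (f x)].

Section Morphisms.
Variables (R : nzRingType) (X Y Z : ScalableMonoid R).

Lemma sm_morphism_comp (f : X -> Y) (g : Y -> Z) :
  sm_morphism f -> sm_morphism g -> sm_morphism (g \o f).
Proof.
move=> [f1 fM fZ] [g1 gM gZ]; split=> [|x y|l x] /=.
- by rewrite f1 g1.
- by rewrite fM gM.
- by rewrite fZ gZ.
Qed.

Lemma sm_morphism_can (f : X -> Y) (g : Y -> X) :
  cancel f g -> cancel g f -> sm_morphism f -> sm_morphism g.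
Proof.
move=> fK gK [f1 fM fZ]; split=> [|x y|l x].
- by rewrite -f1 fK.
- by rewrite -{1}(gK x) -{1}(gK y) -fM fK.
- by rewrite -{1}(gK x) -fZ fK.
Qed.

Lemma sm_morphism_zpow (f : X -> Y) a b k :
  sm_morphism f -> f (zpow a b k) = zpow (f a) (f b) k.
Proof.
move=> [f1 fM _]; have f_iter c m : f (iter m (sm_mul c) sm_one) = iter m (sm_mul (f c)) sm_one.
  by elim: m => [|m IH] //=; rewrite fM IH.
by case: k => m; apply: f_iter.
Qed.

Lemma sm_morphism_expansion (f : X -> Y) n (e einv : 'I_n -> X) mu k :
  sm_morphism f -> f (expansion e einv mu k) = expansion (f \o e) (f \o einv) mu k.
Proof.
move=> fhom; have [f1 fM fZ] := fhom.
rewrite /expansion fZ (big_morph f fM f1); congr sm_scale.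
by apply: eq_bigr => i _; rewrite sm_morphism_zpow.
Qed.

Lemma is_basis_morphism (f : X -> Y) (g : Y -> X) n (e : 'I_n -> X) :
  cancel f g -> cancel g f -> sm_morphism f -> is_basis e -> is_basis (f \o e).
Proof.
move=> fK gK fhom [einv [einvP expP]]; have [_ fM _] := fhom.
exists (f \o einv); split=> [i|y] /=.
  by rewrite -!fM; case: (einvP i) => -> ->; case: fhom.
have [p [pE p_uniq]] := expP (g y).
exists p; split=> [|q qE]; first by rewrite -sm_morphism_expansion // pE gK.
by apply: p_uniq; apply: (can_inj fK); rewrite sm_morphism_expansion // qE gK.
Qed.

End Morphisms.

Lemma sm_isomorphicP (K : fieldType) (Q Q' : ScalableMonoid K) :
  sm_isomorphic Q Q' <-> exists f : Q -> Q', bijective f /\ sm_morphism f.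
Proof.
by split=> [[f [fbij [f1 [fM fZ]]]]|[f [fbij [f1 fM fZ]]]]; exists f.
Qed.

Section Isomorphisms.
Variables (K : fieldType) (Q Q' Q'' : ScalableMonoid K).

Lemma sm_isomorphic_sym : sm_isomorphic Q Q' -> sm_isomorphic Q' Q.
Proof.
move=> /sm_isomorphicP[f [[g fK gK] fhom]]; apply/sm_isomorphicP.
by exists g; split; [exists f | apply: sm_morphism_can fhom].
Qed.

Lemma sm_isomorphic_trans : sm_isomorphic Q Q' -> sm_isomorphic Q' Q'' -> sm_isomorphic Q Q''.
Proof.
move=> /sm_isomorphicP[f [fbij fhom]] /sm_isomorphicP[g [gbij ghom]].
apply/sm_isomorphicP; exists (g \o f).
by split; [apply: bij_comp | apply: sm_morphism_comp].
Qed.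

Lemma has_basis_of_size_isomorphic n :
  sm_isomorphic Q Q' -> has_basis_of_size Q n -> has_basis_of_size Q' n.
Proof.
move=> /sm_isomorphicP[f [[g fK gK] fhom]] [e ebasis].
by exists (f \o e); apply: is_basis_morphism ebasis.
Qed.

End Isomorphisms.

Section CoordinateSpace.
Variables (R : comNzRingType) (n : nat).

Definition coord := (R * {ffun 'I_n -> int})%type.

Definition coord_mul (p q : coord) : coord := (p.1 * q.1, p.2 + q.2).
Definition coord_scale (l : R) (p : coord) : coord := (l * p.1, p.2).

Lemma coord_mulA p q r : coord_mul p (coord_mul q r) = coord_mul (coord_mul p q) r.
Proof. by rewrite /coord_mul /= mulrA addrA. Qed.

Lemma coord_mul1p p : coord_mul (1, 0) p = p.
Proof. by case: p => a k; rewrite /coord_mul /= mul1r add0r. Qed.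

Lemma coord_mulp1 p : coord_mul p (1, 0) = p.
Proof. by case: p => a k; rewrite /coord_mul /= mulr1 addr0. Qed.

Lemma coord_scale1 p : coord_scale 1 p = p.
Proof. by case: p => a k; rewrite /coord_scale mul1r. Qed.

Lemma coord_scaleA a b p : coord_scale a (coord_scale b p) = coord_scale (a * b) p.
Proof. by rewrite /coord_scale /= mulrA. Qed.

Lemma coord_scale_mull a p q :
  coord_scale a (coord_mul p q) = coord_mul (coord_scale a p) q.
Proof. by rewrite /coord_scale /coord_mul /= mulrA. Qed.

Lemma coord_scale_mulr a p q :
  coord_scale a (coord_mul p q) = coord_mul p (coord_scale a q).
Proof. by rewrite /coord_scale /coord_mul /= mulrCA. Qed.

Definition coord_sm : ScalableMonoid R :=
  Build_ScalableMonoid coord_mulA coord_mul1p coord_mulp1 coord_scale1 coord_scaleA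
    coord_scale_mull coord_scale_mulr.

End CoordinateSpace.

Section Expansion.
Variables (K : fieldType) (Q : ScalableMonoid K).
Hypothesis mulC : forall x y : Q, sm_mul x y = sm_mul y x.

HB.instance Definition _ :=
  Monoid.isComLaw.Build Q sm_one sm_mul (@sm_mulA _ Q) mulC (@sm_mul1x _ Q).

Lemma zpow_natB (a b : Q) (m k : nat) : sm_mul a b = sm_one ->
  zpow a b (m%:Z - k%:Z) = sm_mul (iter m (sm_mul a) sm_one) (iter k (sm_mul b) sm_one).
Proof.
move=> abK; elim: k m => [|k IH] [|m].
- by rewrite /= sm_mul1x.
- by rewrite subr0 /= sm_mulx1.
- by rewrite sub0r -NegzE /= sm_mul1x.
have -> : m.+1%:Z - k.+1%:Z = m%:Z - k%:Z by lia.
rewrite IH /= -sm_mulA [sm_mul (iter m _ _) (sm_mul b _)]sm_mulA.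
by rewrite [sm_mul (iter m _ _) b]mulC -sm_mulA sm_mulA abK sm_mul1x.
Qed.

Lemma zpowD (a b : Q) k l : sm_mul a b = sm_one ->
  zpow a b (k + l) = sm_mul (zpow a b k) (zpow a b l).
Proof.
move=> abK; have natB (z : int) : exists m j : nat, z = m%:Z - j%:Z.
  by case: z => m; [exists m, 0%N; rewrite subr0 | exists 0%N, m.+1; rewrite sub0r NegzE].
have [m1 [j1 ->]] := natB k; have [m2 [j2 ->]] := natB l.
have -> : m1%:Z - j1%:Z + (m2%:Z - j2%:Z) = (m1 + m2)%N%:Z - (j1 + j2)%N%:Z by lia.
by rewrite !zpow_natB // !iter_sm_mulD Monoid.mulmACA.
Qed.

Lemma expansion_morphism n (e einv : 'I_n -> Q) :
  (forall i, sm_mul (e i) (einv i) = sm_one) ->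
  sm_morphism (fun p : coord_sm K n => expansion e einv p.1 p.2).
Proof.
move=> einvK; split=> [|[mu k] [nu l]|c [mu k]]; rewrite /expansion /=.
- by rewrite sm_scale1 big1 // => i _; rewrite ffunE.
- rewrite -sm_scale_mull -sm_scale_mulr sm_scaleA -big_split /=.
  by congr sm_scale; apply: eq_bigr => i _; rewrite ffunE zpowD.
- by rewrite sm_scaleA.
Qed.

Lemma coord_sm_isomorphic n (e : 'I_n -> Q) : is_basis e -> sm_isomorphic (coord_sm K n) Q.
Proof.
move=> [einv [einvP expP]]; apply/sm_isomorphicP.
exists (fun p : coord_sm K n => expansion e einv p.1 p.2); split.
  have expansion_onto x : exists p : coord_sm K n, expansion e einv p.1 p.2 = x.
    by have [p [pE _]] := expP x; exists p.
  have [coords coordsK] := choice _ expansion_onto.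
  exists coords => [p|x] //.
  have [p0 [_ p0_uniq]] := expP (expansion e einv p.1 p.2).
  by rewrite -(p0_uniq _ (coordsK _)) (p0_uniq p).
by apply: expansion_morphism => i; case: (einvP i).
Qed.

End Expansion.

Lemma ex_minimal (P : nat -> Prop) :
  (exists n, P n) -> exists n, P n /\ forall m, P m -> (n <= m)%N.
Proof.
pose b m : bool := excluded_middle_informative (P m).
have bP m : reflect (P m) (b m) by rewrite /b; case: excluded_middle_informative; constructor.
move=> [n0 /bP Pn0]; have [n /bP Pn n_min] := ex_minnP (ex_intro b n0 Pn0).
by exists n; split=> // m /bP; apply: n_min.
Qed.

Lemma rank_spec (K : fieldType) (Q : ScalableMonoid K) : is_quantity_space Q ->
  has_basis_of_size Q (rank Q) /\ forall m, has_basis_of_size Q m -> (rank Q <= m)%N.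
Proof. by move=> [_ /ex_minimal minP]; apply: (epsilon_spec (inhabits 0%N) _ minP). Qed.

Theorem proposition3p23 (K : fieldType) (Q Q' : ScalableMonoid K) :
  is_quantity_space Q -> is_quantity_space Q' ->
  (sm_isomorphic Q Q' <-> rank Q = rank Q').
Proof.
move=> qsQ qsQ'; have [basisQ rank_min] := rank_spec qsQ.
have [basisQ' rank_min'] := rank_spec qsQ'.
split=> [iso | rankE].
  apply/eqP; rewrite eqn_leq; apply/andP; split.
    exact/rank_min/(has_basis_of_size_isomorphic (sm_isomorphic_sym iso)).
  exact/rank_min'/(has_basis_of_size_isomorphic iso).
rewrite rankE in basisQ; have [e ebasis] := basisQ; have [e' e'basis] := basisQ'.
apply: sm_isomorphic_trans (coord_sm_isomorphic qsQ'.1 e'basis).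
exact: sm_isomorphic_sym (coord_sm_isomorphic qsQ.1 ebasis).
Qed.
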